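(* Let $a,b,c,d$ be fixed indeterminates and, for $j=1,2$, let $u_j,x_j,y_j$ be indeterminates. For indeterminates (or polynomials) $u,x,y$ put \[ N(u,x,y)=\begin{pmatrix} u & -ad\,y & -ad\,x-bd\,y\\ x & u-bx-cy & -cx-dy\\ y & ax & u-cy\end{pmatrix}, \] and $N_j=N(u_j,x_j,y_j)$ for $j=1,2$. Then $N_1N_2=N_2N_1=N(u_3,x_3,y_3)$, where \begin{align*} u_3&=u_1u_2-ad\,x_2y_1-ad\,x_1y_2-bd\,y_1y_2,\\ x_3&=u_1x_2+u_2x_1-b\,x_1x_2-c\,x_1y_2-c\,x_2y_1-d\,y_1y_2,\\ y_3&=u_1y_2+u_2y_1+a\,x_1x_2-c\,y_1y_2; \end{align*} that is, the product is commutative and is again a matrix of the same form. Moreover: (i) Specializing $a=0$, $b=1$, $c=0$, $d=-D$, one has $\det N(u,x,y)=(u-x)(u^2-Dy^2)$, and taking determinants in $N_1N_2=N(u_3,x_3,y_3)$ yields Brahmagupta's identity \[ (u_1u_2+Dy_1y_2)^2-D(u_1y_2+u_2y_1)^2=(u_1^2-Dy_1^2)(u_2^2-Dy_2^2). \] (ii) Specializing $a=0$, $b=C$, $c=-B$, $d=1$, one has $\det N(u,x,y)=(u-Cx+By)(u^2+Buy+Cy^2)$, and taking determinants in $N_1N_2=N(u_3,x_3,y_3)$ yields, for the principal binary quadratic form $Q(u,y)=u^2+Buy+Cy^2$, \[ Q(u_1u_2-Cy_1y_2,\;u_1y_2+u_2y_1+By_1y_2)=Q(u_1,y_1)\,Q(u_2,y_2),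 \] which is the special case of Gauss' bilinear composition for $Q_1=Q_2=(1,B,C)$.
   Context: $D$, $B$, $C$ denote further indeterminates (or integers). The binary quadratic form $u^2+Buy+Cy^2$ is abbreviated $(1,B,C)$. *)

(* polynomial identities in indeterminates are stated
   for arbitrary elements of an arbitrary commutative ring. *)
From HB Require Import structures.
From mathcomp Require Import all_boot all_order all_algebra.
Set Implicit Arguments. Unset Strict Implicit. Unset Printing Implicit Defensive.
Import Order.TTheory GRing.Theory Num.Theory.
Local Open Scope ring_scope.

Definition Nmx (R : comPzRingType) (a b c d u x y : R) : 'M[R]_3 :=
  \matrix_(i < 3, j < 3)
    nth 0 (nth [::]
      [:: [:: u; - (a * d * y); - (a * d * x) - b * d * y];
          [:: x; u - b * x - c * y; - (c * x) - d * y];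
          [:: y; a * x; u - c * y]] i) j.

Definition Qform (R : comPzRingType) (B C u y : R) : R := u ^+ 2 + B * u * y + C * y ^+ 2.

From HB Require Import structures.
From mathcomp Require Import all_boot all_order all_algebra ring.
Import GRing.Theory.
Local Open Scope ring_scope.

(* All the statements are polynomial identities in the entries, so they hold
   over any commutative ring and are checked by normalization once the matrix
   product and the determinant are written out entrywise.  In the paper the two
   composition laws are obtained by taking determinants of N1 N2 = N3 and
   cancelling the linear factor; that cancellation needs an integral domain, so
   here they are verified directly instead. *)

Lemma det_mx33 (R : comPzRingType) (A : 'M[R]_3) :
  \det A = A 0 0 * A 1 1 * A 2 2 + A 0 1 * A 1 2 * A 2 0 + A 0 2 * A 1 0 * A 2 1
         - A 0 2 * A 1 1 * A 2 0 - A 0 0 * A 1 2 * A 2 1 - A 0 1 * A 1 0 * A 2 2.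
Proof.
(* Reindexing through [inord] makes every index produced by the Laplace
   expansion compute to a numeral, so that equal entries become syntactically
   equal. *)
have -> : A = \matrix_(i, j) A (inord i) (inord j).
  by apply/matrixP => i j; rewrite mxE !inord_val.
rewrite (expand_det_row _ 0) !big_ord_recr big_ord0 /=.
rewrite /cofactor !(expand_det_row _ 0) !big_ord_recr !big_ord0 /=.
rewrite /cofactor !det_mx11 !mxE /=.
ring.
Qed.

Section NmxAlgebra.

Variables (R : comPzRingType) (a b c d : R).

Local Notation N := (Nmx a b c d).

Lemma mul_Nmx (u1 x1 y1 u2 x2 y2 : R) :
  N u1 x1 y1 *m N u2 x2 y2 =
  N (u1 * u2 - a * d * x2 * y1 - a * d * x1 * y2 - b * d * y1 * y2)
    (u1 * x2 + u2 * x1 - b * x1 * x2 - c * x1 * y2 - c * x2 * y1 - d * y1 * y2)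
    (u1 * y2 + u2 * y1 + a * x1 * x2 - c * y1 * y2).
Proof.
apply/matrixP => i j; rewrite !mxE !big_ord_recr big_ord0 /= !mxE.
by case: i => [[|[|[|i]]] ?] //=; case: j => [[|[|[|j]]] ?] //=; ring.
Qed.

Lemma mul_NmxC (u1 x1 y1 u2 x2 y2 : R) :
  N u1 x1 y1 *m N u2 x2 y2 = N u2 x2 y2 *m N u1 x1 y1.
Proof. by rewrite !mul_Nmx; congr Nmx; ring. Qed.

End NmxAlgebra.

Lemma det_Nmx_Brahmagupta (R : comPzRingType) (D u x y : R) :
  \det (Nmx 0 1 0 (- D) u x y) = (u - x) * (u ^+ 2 - D * y ^+ 2).
Proof. by rewrite det_mx33 !mxE /=; ring. Qed.

Lemma Brahmagupta_identity (R : comPzRingType) (D u1 y1 u2 y2 : R) :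
  (u1 * u2 + D * y1 * y2) ^+ 2 - D * (u1 * y2 + u2 * y1) ^+ 2
  = (u1 ^+ 2 - D * y1 ^+ 2) * (u2 ^+ 2 - D * y2 ^+ 2).
Proof. by ring. Qed.

Lemma det_Nmx_Qform (R : comPzRingType) (B C u x y : R) :
  \det (Nmx 0 C (- B) 1 u x y) = (u - C * x + B * y) * Qform B C u y.
Proof. by rewrite det_mx33 !mxE /= /Qform; ring. Qed.

Lemma QformM (R : comPzRingType) (B C u1 y1 u2 y2 : R) :
  Qform B C (u1 * u2 - C * y1 * y2) (u1 * y2 + u2 * y1 + B * y1 * y2)
  = Qform B C u1 y1 * Qform B C u2 y2.
Proof. by rewrite /Qform; ring. Qed.

Theorem proposition2p1 (R : comPzRingType) (a b c d u1 x1 y1 u2 x2 y2 : R) :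
  let u3 := u1 * u2 - a * d * x2 * y1 - a * d * x1 * y2 - b * d * y1 * y2 in
  let x3 := u1 * x2 + u2 * x1 - b * x1 * x2 - c * x1 * y2 - c * x2 * y1
            - d * y1 * y2 in
  let y3 := u1 * y2 + u2 * y1 + a * x1 * x2 - c * y1 * y2 in
  (Nmx a b c d u1 x1 y1 *m Nmx a b c d u2 x2 y2 = Nmx a b c d u3 x3 y3) /\
      (Nmx a b c d u2 x2 y2 *m Nmx a b c d u1 x1 y1 = Nmx a b c d u3 x3 y3) /\
      (* (i) *)
      (forall D u x y : R,
         \det (Nmx 0 1 0 (- D) u x y) = (u - x) * (u ^+ 2 - D * y ^+ 2)) /\
      (forall D v1 w1 v2 w2 : R,
         (v1 * v2 + D * w1 * w2) ^+ 2 - D * (v1 * w2 + v2 * w1) ^+ 2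
         = (v1 ^+ 2 - D * w1 ^+ 2) * (v2 ^+ 2 - D * w2 ^+ 2)) /\
      (* (ii) *)
      (forall B C u x y : R,
         \det (Nmx 0 C (- B) 1 u x y) = (u - C * x + B * y) * Qform B C u y) /\
      (forall B C v1 w1 v2 w2 : R,
         Qform B C (v1 * v2 - C * w1 * w2) (v1 * w2 + v2 * w1 + B * w1 * w2)
         = Qform B C v1 w1 * Qform B C v2 w2).
Proof.
move=> u3 x3 y3.
split; first exact: mul_Nmx.
split; first by rewrite -mul_NmxC mul_Nmx.
split; first exact: det_Nmx_Brahmagupta.
split; first exact: Brahmagupta_identity.
split; first exact: det_Nmx_Qform.
exact: QformM.
Qed.
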